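(* Let $\mathbf{A}\in\mathbb{R}^{n\times d}$, $\mathbf{B}=[\mathbf{b}_1,\dots,\mathbf{b}_{d_B}]\in\mathbb{R}^{n\times d_B}$, $\mathbf{C}=[\mathbf{c}_1,\dots,\mathbf{c}_{n_C}]^{\rm T}\in\mathbb{R}^{n_C\times d}$, and let $k,r$ be integers with $1\le k\le\mathrm{rank}(\mathbf{B})$, $1\le r\le\mathrm{rank}(\mathbf{C})$. Then $$P_{k,r}(x;\mathbf{A},\mathbf{B},\mathbf{C})=\frac1k\sum_{i=1}^{d_B}\|\mathbf{b}_i\|^2P_{k-1,r}(x;\mathbf{Q}_{\{i\}}\mathbf{A},\mathbf{Q}_{\{i\}}\mathbf{B},\mathbf{C})$$ and $$P_{k,r}(x;\mathbf{A},\mathbf{B},\mathbf{C})=\frac1r\sum_{i=1}^{n_C}\|\mathbf{c}_i\|^2P_{k,r-1}(x;\mathbf{A}\mathbf{P}_{\{i\}},\mathbf{B},\mathbf{C}\mathbf{P}_{\{i\}}).$$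
   Context: Notation: $\mathbf{M}_{R,S}$, $\mathbf{M}_{:,S}$, $\mathbf{M}_{R,:}$ are submatrices; $\mathbf{M}^\dagger$ Moore–Penrose pseudoinverse with $\mathbf{M}_{R,S}^\dagger:=(\mathbf{M}_{R,S})^\dagger$; empty determinants are $1$ and $\mathbf{M}_{:,\emptyset}\mathbf{M}_{:,\emptyset}^\dagger$, $\mathbf{M}_{\emptyset,:}^\dagger\mathbf{M}_{\emptyset,:}$ are zero. $\mathbf{Q}_{\{i\}}=\mathbf{I}_n-\mathbf{b}_i\mathbf{b}_i^\dagger$ and $\mathbf{P}_{\{i\}}=\mathbf{I}_d-\mathbf{c}_i^{\rm T\dagger}\mathbf{c}_i^{\rm T}$ (i.e. $\mathbf{Q}_S=\mathbf{I}_n-\mathbf{B}_{:,S}\mathbf{B}_{:,S}^\dagger$, $\mathbf{P}_R=\mathbf{I}_d-\mathbf{C}_{R,:}^\dagger\mathbf{C}_{R,:}$ for singletons). For general $\mathbf{A}',\mathbf{B}',\mathbf{C}'$ of shapes $n\times d$, $n\times d_B$, $n_C\times d$: $p_{T,U}(x;\mathbf{A}',\mathbf{B}',\mathbf{C}')=\det[x\mathbf{I}_d-(\mathbf{Q}'_T\mathbf{A}'\mathbf{P}'_U)^{\rm T}(\mathbf{Q}'_T\mathbf{A}'\mathbf{P}'_U)]$ with $\mathbf{Q}'_T=\mathbf{I}_n-\mathbf{B}'_{:,T}\mathbf{B}'^\dagger_{:,T}$, $\mathbf{P}'_U=\mathbf{I}_d-\mathbf{C}'^\dagger_{U,:}\mathbf{C}'_{U,:}$,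 and $P_{k,r}(x;\mathbf{A}',\mathbf{B}',\mathbf{C}')=\sum_{U\subset[n_C],|U|=r}\sum_{T\subset[d_B],|T|=k}\det[\mathbf{C}'_{U,:}\mathbf{C}'^{\rm T}_{U,:}]\det[\mathbf{B}'^{\rm T}_{:,T}\mathbf{B}'_{:,T}]\,p_{T,U}(x;\mathbf{A}',\mathbf{B}',\mathbf{C}')$. *)

From HB Require Import structures.
From mathcomp Require Import all_boot all_order all_algebra.
From Stdlib Require Import ClassicalEpsilon.
Set Implicit Arguments. Unset Strict Implicit. Unset Printing Implicit Defensive.
Import Order.TTheory GRing.Theory Num.Theory.
Local Open Scope ring_scope.

Section Defs.
Variable R : realFieldType.

Definition penrose m n (M : 'M[R]_(m, n)) (X : 'M[R]_(n, m)) : Prop :=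
  [/\ M *m X *m M = M, X *m M *m X = X,
      (M *m X)^T = M *m X & (X *m M)^T = X *m M].

Definition pinv m n (M : 'M[R]_(m, n)) : 'M[R]_(n, m) :=
  epsilon (inhabits 0) (penrose M).

(* submatrices B_{:,T} and C_{U,:} (indices of T, U in increasing order) *)
Definition csub n dB (B : 'M[R]_(n, dB)) (T : {set 'I_dB}) : 'M[R]_(n, #|T|) :=
  colsub (fun j => enum_val j) B.
Definition rsub nC d (C : 'M[R]_(nC, d)) (U : {set 'I_nC}) : 'M[R]_(#|U|, d) :=
  rowsub (fun j => enum_val j) C.

Definition Qproj n dB (B : 'M[R]_(n, dB)) (T : {set 'I_dB}) : 'M[R]_n :=
  1%:M - csub B T *m pinv (csub B T).
Definition Pproj nC d (C : 'M[R]_(nC, d)) (U : {set 'I_nC}) : 'M[R]_d :=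
  1%:M - pinv (rsub C U) *m rsub C U.

Definition pTU n d dB nC (A : 'M[R]_(n, d)) (B : 'M[R]_(n, dB)) (C : 'M[R]_(nC, d))
    (T : {set 'I_dB}) (U : {set 'I_nC}) : {poly R} :=
  let M := Qproj B T *m A *m Pproj C U in char_poly (M^T *m M).

Definition Pkr n d dB nC (k r : nat) (A : 'M[R]_(n, d)) (B : 'M[R]_(n, dB))
    (C : 'M[R]_(nC, d)) : {poly R} :=
  \sum_(U : {set 'I_nC} | #|U| == r) \sum_(T : {set 'I_dB} | #|T| == k)
    (\det (rsub C U *m (rsub C U)^T) * \det ((csub B T)^T *m csub B T))
      *: pTU A B C T U.

Definition colnorm2 n dB (B : 'M[R]_(n, dB)) (i : 'I_dB) : R := \sum_j B j i ^+ 2.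
Definition rownorm2 nC d (C : 'M[R]_(nC, d)) (i : 'I_nC) : R := \sum_j C i j ^+ 2.

End Defs.

From HB Require Import structures.
From mathcomp Require Import all_boot all_order all_algebra.
From Stdlib Require Import ClassicalEpsilon.
From mathcomp Require Import fingroup perm ring.
Set Implicit Arguments. Unset Strict Implicit. Unset Printing Implicit Defensive.
Import Order.TTheory GRing.Theory Num.Theory.
Local Open Scope ring_scope.

(* Adjoining a block N to a block M, the column operation M |-> (I - N (N^T N)^-1 N^T) M
   makes the Gram matrix of [N M] block diagonal.  For a single column b_i of B this gives
   det Gram(B_{:,T+i}) = |b_i|^2 det Gram((Q_{i} B)_{:,T}) and, when this is nonzero,
   Q_{T+i} = Q_T(Q_{i} B) Q_{i} = Q_{i} Q_T(Q_{i} B); when it is zero both sides vanish.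
   So the i-th summand of the right-hand side is the part of P_{k,r} indexed by the
   k-sets containing i, and every k-set is counted k times.  On the row side
   P_U(C) = Q_U(C^T), and the same computation applies to C^T.  Only invertible Gram
   matrices occur, for which the pseudoinverse is (M^T M)^-1 M^T. *)

Section OrthogonalProjection.
Variable F : comUnitRingType.

Definition gram m n (M : 'M[F]_(m, n)) : 'M[F]_n := M^T *m M.
Definition oproj m n (M : 'M[F]_(m, n)) : 'M[F]_m := M *m invmx (gram M) *m M^T.
Definition coproj m n (M : 'M[F]_(m, n)) : 'M[F]_m := 1%:M - oproj M.

Lemma tr_gram m n (M : 'M[F]_(m, n)) : (gram M)^T = gram M.
Proof. by rewrite trmx_mul trmxK. Qed.

Lemma gram_mulmx m n p (M : 'M[F]_(m, n)) (S : 'M[F]_(n, p)) :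
  gram (M *m S) = S^T *m gram M *m S.
Proof. by rewrite /gram trmx_mul !mulmxA. Qed.

Lemma det_gram_mulmx m n (M : 'M[F]_(m, n)) (S : 'M[F]_n) :
  \det (gram (M *m S)) = \det S ^+ 2 * \det (gram M).
Proof. by rewrite gram_mulmx !det_mulmx det_tr; ring. Qed.

Lemma gram_row_mx m n p (M : 'M[F]_(m, n)) (N : 'M[F]_(m, p)) :
  gram (row_mx M N) = block_mx (gram M) (M^T *m N) (N^T *m M) (gram N).
Proof. by rewrite /gram tr_row_mx mul_col_row. Qed.

Lemma invmx_mul n (S T : 'M[F]_n) : S \in unitmx -> T \in unitmx ->
  invmx (S *m T) = invmx T *m invmx S.
Proof.
move=> uS uT; have uST : S *m T \in unitmx by rewrite unitmx_mul uS.
have inv_l : invmx T *m invmx S *m (S *m T) = 1%:M.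
  by rewrite -mulmxA mulKmx // mulVmx.
by rewrite -[RHS]mulmx1 -(mulmxV uST) mulmxA inv_l mul1mx.
Qed.

Lemma tr_oproj m n (M : 'M[F]_(m, n)) : (oproj M)^T = oproj M.
Proof. by rewrite /oproj !trmx_mul trmxK trmx_inv tr_gram mulmxA. Qed.

Lemma tr_coproj m n (M : 'M[F]_(m, n)) : (coproj M)^T = coproj M.
Proof. by rewrite /coproj linearB /= trmx1 tr_oproj. Qed.

Lemma oproj_mulmx m n (M : 'M[F]_(m, n)) (S : 'M[F]_n) :
  S \in unitmx -> gram M \in unitmx -> oproj (M *m S) = oproj M.
Proof.
move=> uS uG; rewrite /oproj gram_mulmx !invmx_mul ?unitmx_mul ?unitmx_tr ?uS ?uG //.
by rewrite trmx_mul !mulmxA mulmxK // mulmxKV ?unitmx_tr.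
Qed.

Lemma oproj_id m n (M : 'M[F]_(m, n)) : gram M \in unitmx -> oproj M *m M = M.
Proof. by move=> uG; rewrite /oproj -mulmxA mulmxKV. Qed.

Lemma coproj_id m n (M : 'M[F]_(m, n)) : gram M \in unitmx -> coproj M *m M = 0.
Proof. by move=> uG; rewrite /coproj mulmxBl mul1mx oproj_id ?subrr. Qed.

Lemma oproj_orth m n p (M : 'M[F]_(m, n)) (N : 'M[F]_(m, p)) :
  M^T *m N = 0 -> oproj M *m oproj N = 0.
Proof. by move=> MN; rewrite /oproj -!mulmxA (mulmxA M^T) MN mul0mx !mulmx0. Qed.

End OrthogonalProjection.

Section AdjoinColumns.
Variables (F : comUnitRingType) (n p m : nat).
Variables (N : 'M[F]_(n, p)) (M : 'M[F]_(n, m)).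
Hypothesis unit_gramN : gram N \in unitmx.

Let L := coproj N *m M.

Lemma coproj_orthl : N^T *m L = 0.
Proof. by rewrite /L mulmxA -tr_coproj -trmx_mul coproj_id // trmx0 mul0mx. Qed.

Lemma coproj_orthr : L^T *m N = 0.
Proof. by rewrite -[L^T *m N]trmxK trmx_mul trmxK coproj_orthl trmx0. Qed.

Lemma gram_row_mx_coproj :
  gram (row_mx N L) = block_mx (gram N) 0 0 (gram L).
Proof. by rewrite gram_row_mx coproj_orthl coproj_orthr. Qed.

Let elim_mx : 'M[F]_(p + m) :=
  block_mx 1%:M (- (invmx (gram N) *m N^T *m M)) 0 1%:M.

Lemma det_elim_mx : \det elim_mx = 1.
Proof. by rewrite det_ublock !det1 mulr1. Qed.

Lemma row_mx_elim : row_mx N M *m elim_mx = row_mx N L.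
Proof.
rewrite mul_row_block !mulmx1 !mulmx0 addr0 mulmxN.
by rewrite /L /coproj mulmxBl mul1mx /oproj !mulmxA addrC.
Qed.

Lemma det_gram_row_mx :
  \det (gram (row_mx N M)) = \det (gram N) * \det (gram L).
Proof.
rewrite -[LHS]mul1r -(expr1n _ 2) -det_elim_mx -det_gram_mulmx row_mx_elim.
by rewrite gram_row_mx_coproj det_ublock.
Qed.

Lemma oproj_row_mx : gram L \in unitmx ->
  oproj (row_mx N M) = oproj N + oproj L.
Proof.
move=> unit_gramL.
have unit_elim : elim_mx \in unitmx by rewrite unitmxE det_elim_mx unitr1.
have unit_gramNM : gram (row_mx N M) \in unitmx.
  by rewrite unitmxE det_gram_row_mx unitrM -!unitmxE unit_gramN.
rewrite -(oproj_mulmx unit_elim unit_gramNM) row_mx_elim /oproj.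
rewrite gram_row_mx_coproj invmx_block_diag -?gram_row_mx_coproj; last first.
  by rewrite -row_mx_elim gram_mulmx !unitmx_mul unitmx_tr unit_elim unit_gramNM.
by rewrite tr_row_mx mul_row_block !mulmx0 addr0 add0r mul_row_col.
Qed.

Lemma coproj_row_mx : gram L \in unitmx ->
  coproj (row_mx N M) = coproj L *m coproj N.
Proof.
move=> unit_gramL; rewrite /coproj oproj_row_mx //.
have LN := oproj_orth coproj_orthr.
by rewrite mulmxBl mul1mx mulmxBr mulmx1 LN subr0 opprD addrA addrAC.
Qed.

Lemma coproj_row_mxC : gram L \in unitmx ->
  coproj (row_mx N M) = coproj N *m coproj L.
Proof.
move=> unit_gramL.
by rewrite -tr_coproj coproj_row_mx // trmx_mul !tr_coproj.
Qed.

End AdjoinColumns.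

Section ColumnReindexing.
Variables (F : comUnitRingType) (n N : nat) (X : 'M[F]_(n, N)).

Lemma card_codom_eq m m' (f : 'I_m -> 'I_N) (g : 'I_m' -> 'I_N) :
  injective f -> injective g -> codom f =i codom g -> m = m'.
Proof.
move=> injf injg fg.
by rewrite -[m]card_ord -[m']card_ord -(card_codom injf) -(card_codom injg); apply: eq_card.
Qed.

Lemma colsub_codom_perm m (f g : 'I_m -> 'I_N) :
  injective f -> injective g -> codom f =i codom g ->
  exists s : {perm 'I_m}, colsub g X = col_perm s (colsub f X).
Proof.
move=> injf injg fg.
have g_in j : g j \in codom f by rewrite fg codom_f.
pose h j := iinv (g_in j).
have fh j : f (h j) = g j := f_iinv (g_in j).
have injh : injective h by move=> j1 j2 /(congr1 f); rewrite !fh => /injg.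
by exists (perm injh); apply/matrixP => r j; rewrite !mxE permE fh.
Qed.

Lemma det_gram_colsub_codom m m' (f : 'I_m -> 'I_N) (g : 'I_m' -> 'I_N) :
  injective f -> injective g -> codom f =i codom g ->
  \det (gram (colsub f X)) = \det (gram (colsub g X)).
Proof.
move=> injf injg fg; have em := card_codom_eq injf injg fg; subst m'.
have [s ->] := colsub_codom_perm injf injg fg.
by rewrite col_permE det_gram_mulmx det_perm sqrr_sign mul1r.
Qed.

Lemma oproj_colsub_codom m m' (f : 'I_m -> 'I_N) (g : 'I_m' -> 'I_N) :
  injective f -> injective g -> codom f =i codom g ->
  gram (colsub f X) \in unitmx -> oproj (colsub g X) = oproj (colsub f X).
Proof.
move=> injf injg fg; have em := card_codom_eq injf injg fg; subst m'.
have [s ->] := colsub_codom_perm injf injg fg.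
by rewrite col_permE; apply: oproj_mulmx; rewrite unitmx_perm.
Qed.

End ColumnReindexing.

Section IndexSets.
Variable N : nat.

Lemma codom_enum_val (T : {set 'I_N}) :
  codom (fun j : 'I_#|T| => enum_val j) =i T.
Proof.
move=> x; apply/codomP/idP => [[j ->]|xT]; first exact: enum_valP.
by exists (enum_rank_in xT x); rewrite enum_rankK_in.
Qed.

Definition setU1_index (i : 'I_N) (T : {set 'I_N}) (j : 'I_(1 + #|T|)) : 'I_N :=
  if split j is inr j' then enum_val j' else i.
Arguments setU1_index i T j : clear implicits.

Lemma setU1_index_inj i (T : {set 'I_N}) : i \notin T -> injective (setU1_index i T).
Proof.
move=> iT j1 j2; rewrite /setU1_index.
case: splitP => a1 e1; case: splitP => a2 e2 h.
- by apply: val_inj; rewrite /= e1 e2 (ord1 a1) (ord1 a2).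
- by case/negP: iT; rewrite h enum_valP.
- by case/negP: iT; rewrite -h enum_valP.
- by apply: val_inj; rewrite /= e1 e2 (enum_val_inj h).
Qed.

Lemma codom_setU1_index i (T : {set 'I_N}) : codom (setU1_index i T) =i i |: T.
Proof.
move=> x; rewrite in_setU1; apply/codomP/idP.
  case=> j ->; rewrite /setU1_index; case: (split j) => a; first by rewrite eqxx.
  by rewrite enum_valP orbT.
case/orP => [/eqP ->|xT].
  by exists (lshift #|T| (ord0 : 'I_1)); rewrite /setU1_index (unsplitK (inl _)).
exists (rshift 1 (enum_rank_in xT x)).
by rewrite /setU1_index (unsplitK (inr _)) enum_rankK_in.
Qed.

Lemma codom_col_index (i : 'I_N) : codom (fun _ : 'I_1 => i) =i [set i].
Proof.
move=> x; rewrite in_set1; apply/codomP/eqP => [[_ ->] //|->].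
by exists ord0.
Qed.

End IndexSets.
Arguments setU1_index {N} i T j.

Section SubmatrixGram.
Variables (R : realFieldType) (n N : nat) (X : 'M[R]_(n, N)).
Implicit Types (i : 'I_N) (T : {set 'I_N}).

Lemma colsub_setU1_index i T :
  colsub (setU1_index i T) X = row_mx (col i X) (csub X T).
Proof.
apply/matrixP => r j; rewrite !mxE /setU1_index.
by case: (split j) => a; rewrite !mxE.
Qed.

Lemma det_gram_csub_setU1 i T : i \notin T ->
  \det (gram (csub X (i |: T))) = \det (gram (row_mx (col i X) (csub X T))).
Proof.
move=> iT; rewrite -colsub_setU1_index; apply: det_gram_colsub_codom.
- exact: enum_val_inj.
- exact: setU1_index_inj.
- by move=> x; rewrite codom_enum_val codom_setU1_index.
Qed.

Lemma oproj_csub_setU1 i T : i \notin T -> gram (csub X (i |: T)) \in unitmx ->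
  oproj (csub X (i |: T)) = oproj (row_mx (col i X) (csub X T)).
Proof.
move=> iT; rewrite -colsub_setU1_index => unit_gram.
apply/esym/oproj_colsub_codom => //.
- exact: enum_val_inj.
- exact: setU1_index_inj.
- by move=> x; rewrite codom_enum_val codom_setU1_index.
Qed.

Lemma det_gram_csub_set1 i : \det (gram (csub X [set i])) = \det (gram (col i X)).
Proof.
rewrite colEsub; apply: det_gram_colsub_codom.
- exact: enum_val_inj.
- by move=> a b _; rewrite (ord1 a) (ord1 b).
- by move=> x; rewrite codom_enum_val codom_col_index.
Qed.

Lemma oproj_csub_set1 i : gram (csub X [set i]) \in unitmx ->
  oproj (csub X [set i]) = oproj (col i X).
Proof.
move=> unit_gram; rewrite colEsub; apply/esym/oproj_colsub_codom => //.
- exact: enum_val_inj.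
- by move=> a b _; rewrite (ord1 a) (ord1 b).
- by move=> x; rewrite codom_enum_val codom_col_index.
Qed.

Lemma det_gram_csub_col0 i T : col i X = 0 -> i \in T -> \det (gram (csub X T)) = 0.
Proof.
move=> Xi0 iT; rewrite -(setD1K iT) det_gram_csub_setU1 ?setD11 // Xi0.
by rewrite gram_row_mx /gram trmx0 !mul0mx mulmx0 det_ublock det_mx11 mxE mul0r.
Qed.

End SubmatrixGram.

Section Projectors.
Variable R : realFieldType.

Lemma penrose_pinv m n (M : 'M[R]_(m, n)) X : penrose M X -> penrose M (pinv M).
Proof. by move=> MX; apply: epsilon_spec; exists X. Qed.

Lemma pinv_full_col m n (M : 'M[R]_(m, n)) : gram M \in unitmx ->
  pinv M = invmx (gram M) *m M^T.
Proof.
move=> unit_gram.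
have pen : penrose M (invmx (gram M) *m M^T).
  split.
  - by rewrite -!mulmxA mulVmx // mulmx1.
  - by rewrite -!mulmxA (mulmxA M^T) mulKmx.
  - by rewrite !trmx_mul trmxK trmx_inv tr_gram -!mulmxA.
  - by rewrite -mulmxA mulVmx // trmx1.
have [MXM _ MX_sym _] := penrose_pinv pen.
have gram_pinv : gram M *m pinv M = M^T by rewrite -mulmxA -MX_sym -trmx_mul MXM.
by rewrite -gram_pinv mulKmx.
Qed.

Lemma pinv_full_row m n (M : 'M[R]_(m, n)) : gram M^T \in unitmx ->
  pinv M = M^T *m invmx (gram M^T).
Proof.
rewrite /gram trmxK => unit_gram.
have pen : penrose M (M^T *m invmx (M *m M^T)).
  split.
  - by rewrite !mulmxA mulmxV // mul1mx.
  - by rewrite -!mulmxA (mulmxA M) mulmxV // mulmx1.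
  - by rewrite mulmxA mulmxV // trmx1.
  - by rewrite !trmx_mul trmxK trmx_inv trmx_mul trmxK mulmxA.
have [MXM _ _ XM_sym] := penrose_pinv pen.
have pinv_gram : pinv M *m (M *m M^T) = M^T.
  by rewrite mulmxA -XM_sym -trmx_mul mulmxA MXM.
by rewrite -[X in X *m invmx _]pinv_gram mulmxK.
Qed.

Lemma Qproj_coproj n N (X : 'M[R]_(n, N)) (T : {set 'I_N}) :
  gram (csub X T) \in unitmx -> Qproj X T = coproj (csub X T).
Proof. by move=> unit_gram; rewrite /Qproj pinv_full_col // /coproj /oproj mulmxA. Qed.

Lemma rsub_tr nC d (C : 'M[R]_(nC, d)) U : rsub C U = (csub C^T U)^T.
Proof. by apply/matrixP => i j; rewrite !mxE. Qed.

Lemma Pproj_Qproj nC d (C : 'M[R]_(nC, d)) U :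
  gram (csub C^T U) \in unitmx -> Pproj C U = Qproj C^T U.
Proof.
move=> unit_gram.
by rewrite /Pproj rsub_tr pinv_full_row trmxK // Qproj_coproj // /coproj /oproj mulmxA.
Qed.

Variables (n N : nat) (X : 'M[R]_(n, N)).
Implicit Types (i : 'I_N) (T : {set 'I_N}).

Lemma csub_mulmx m (Q : 'M[R]_(m, n)) T : csub (Q *m X) T = Q *m csub X T.
Proof. exact/esym/mulmx_colsub. Qed.

Lemma colnorm2E i : colnorm2 X i = gram (col i X) 0 0.
Proof. by rewrite mxE; apply: eq_bigr => j _; rewrite !mxE expr2. Qed.

Lemma colnorm2_eq0 i : colnorm2 X i = 0 -> col i X = 0.
Proof.
move=> /eqP; rewrite psumr_eq0 => [/allP Xi0|j _]; last exact: sqr_ge0.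
apply/matrixP => j k; rewrite !mxE.
by have := Xi0 j (mem_index_enum j); rewrite sqrf_eq0 => /eqP.
Qed.

Lemma unit_gram_col i : colnorm2 X i != 0 -> gram (col i X) \in unitmx.
Proof. by rewrite unitmxE det_mx11 -colnorm2E unitfE. Qed.

Lemma Qproj_set1 i : colnorm2 X i != 0 -> Qproj X [set i] = coproj (col i X).
Proof.
move=> Xi_neq0; have unit_gram : gram (csub X [set i]) \in unitmx.
  by rewrite unitmxE det_gram_csub_set1 -unitmxE unit_gram_col.
by rewrite Qproj_coproj // /coproj oproj_csub_set1.
Qed.

Lemma col_Qproj_set1 i : col i (Qproj X [set i] *m X) = 0.
Proof.
have [/colnorm2_eq0 Xi0|Xi_neq0] := eqVneq (colnorm2 X i) 0.
  by rewrite colEsub -mulmx_colsub -colEsub Xi0 mulmx0.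
by rewrite Qproj_set1 // colEsub -mulmx_colsub -colEsub coproj_id ?unit_gram_col.
Qed.

Lemma colnorm2_det_gram_Qproj i T :
  colnorm2 X i * \det (gram (csub (Qproj X [set i] *m X) T))
  = if i \in T then 0 else \det (gram (csub X (i |: T))).
Proof.
case: ifPn => iT.
  by rewrite (det_gram_csub_col0 (col_Qproj_set1 i) iT) mulr0.
have [Xi0|Xi_neq0] := eqVneq (colnorm2 X i) 0.
  by rewrite Xi0 mul0r (det_gram_csub_col0 (colnorm2_eq0 Xi0) (setU11 i T)).
rewrite det_gram_csub_setU1 // det_gram_row_mx ?unit_gram_col //.
by rewrite det_mx11 -colnorm2E Qproj_set1 // csub_mulmx.
Qed.

Lemma det_gram_csub_setU1_neq0 i T : i \notin T ->
  \det (gram (csub X (i |: T))) != 0 ->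
  colnorm2 X i != 0 /\ gram (coproj (col i X) *m csub X T) \in unitmx.
Proof.
move=> iT; have := colnorm2_det_gram_Qproj i T; rewrite (negbTE iT) => <-.
rewrite mulf_eq0 negb_or.
case/andP=> Xi_neq0; rewrite Qproj_set1 // csub_mulmx => D_neq0.
by rewrite unitmxE unitfE.
Qed.

Lemma Qproj_setU1 i T : i \notin T -> \det (gram (csub X (i |: T))) != 0 ->
  Qproj X (i |: T) = Qproj (Qproj X [set i] *m X) T *m Qproj X [set i].
Proof.
move=> iT D_neq0; have [Xi_neq0 unit_gramL] := det_gram_csub_setU1_neq0 iT D_neq0.
rewrite Qproj_coproj ?unitmxE ?unitfE // /coproj oproj_csub_setU1 ?unitmxE ?unitfE //.
by rewrite Qproj_set1 // Qproj_coproj csub_mulmx // -coproj_row_mx ?unit_gram_col.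
Qed.

Lemma Qproj_setU1C i T : i \notin T -> \det (gram (csub X (i |: T))) != 0 ->
  Qproj X (i |: T) = Qproj X [set i] *m Qproj (Qproj X [set i] *m X) T.
Proof.
move=> iT D_neq0; have [Xi_neq0 unit_gramL] := det_gram_csub_setU1_neq0 iT D_neq0.
rewrite Qproj_coproj ?unitmxE ?unitfE // /coproj oproj_csub_setU1 ?unitmxE ?unitfE //.
by rewrite Qproj_set1 // Qproj_coproj csub_mulmx // -coproj_row_mxC ?unit_gram_col.
Qed.

End Projectors.

Lemma sum_setU1_card (V : nmodType) (I : finType) k (F : {set I} -> V) : (0 < k)%N ->
  \sum_i \sum_(T : {set I} | #|T| == k.-1) (if i \in T then 0 else F (i |: T))
  = (\sum_(T : {set I} | #|T| == k) F T) *+ k.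
Proof.
move=> k_gt0.
have sum_mem (T : {set I}) : #|T| == k -> F T *+ k = \sum_i (if i \in T then F T else 0).
  by move=> /eqP <-; rewrite -big_mkcond sumr_const.
rewrite -sumrMnl (eq_bigr _ sum_mem) [RHS]exchange_big /=; apply: eq_bigr => i _.
rewrite -big_mkcondr; under eq_bigr do rewrite -if_neg; rewrite -big_mkcondr /=.
rewrite [RHS](reindex_onto (fun T : {set I} => i |: T) (fun T : {set I} => T :\ i)) /=; last first.
  by move=> T /andP[_ iT]; rewrite setD1K.
apply: eq_bigl => T; have [iT|iT] /= := boolP (i \in T).
  rewrite andbF; apply/esym/negbTE/negP => /andP[_ /eqP TiE].
  by move: iT; rewrite -TiE setD11.
by rewrite setU11 setU1K // eqxx cardsU1 iT !andbT; case: k k_gt0 {sum_mem}.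
Qed.

Lemma PkrE (R : realFieldType) n d dB nC (A : 'M[R]_(n, d)) (B : 'M[R]_(n, dB))
    (C : 'M[R]_(nC, d)) k r :
  Pkr k r A B C =
  \sum_(U : {set 'I_nC} | #|U| == r) \sum_(T : {set 'I_dB} | #|T| == k)
    (\det (gram (csub C^T U)) * \det (gram (csub B T))) *: pTU A B C T U.
Proof. by apply: eq_bigr => U _; apply: eq_bigr => T _; rewrite rsub_tr trmxK. Qed.

Section Recursion.
Variables (R : realFieldType) (n d dB nC : nat).
Variables (A : 'M[R]_(n, d)) (B : 'M[R]_(n, dB)) (C : 'M[R]_(nC, d)).
Implicit Types (T : {set 'I_dB}) (U : {set 'I_nC}).

Lemma colnorm2_scale_term i T U c :
  colnorm2 B i *: ((c * \det (gram (csub (Qproj B [set i] *m B) T)))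
      *: pTU (Qproj B [set i] *m A) (Qproj B [set i] *m B) C T U)
  = if i \in T then 0 else (c * \det (gram (csub B (i |: T)))) *: pTU A B C (i |: T) U.
Proof.
rewrite scalerA mulrCA colnorm2_det_gram_Qproj.
case: ifPn => iT; first by rewrite mulr0 scale0r.
have [->|D_neq0] := eqVneq (\det (gram (csub B (i |: T)))) 0.
  by rewrite mulr0 !scale0r.
by rewrite /pTU [Qproj _ T *m (_ *m A)]mulmxA -Qproj_setU1.
Qed.

Lemma rownorm2E i : rownorm2 C i = colnorm2 C^T i.
Proof. by apply: eq_bigr => j _; rewrite mxE. Qed.

Lemma rownorm2_scale_term i T U c :
  rownorm2 C i *: ((\det (gram (csub (C *m Pproj C [set i])^T U)) * c)
      *: pTU (A *m Pproj C [set i]) B (C *m Pproj C [set i]) T U)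
  = if i \in U then 0 else (\det (gram (csub C^T (i |: U))) * c) *: pTU A B C T (i |: U).
Proof.
have [Ci0|Ci_neq0] := eqVneq (rownorm2 C i) 0.
  rewrite Ci0 scale0r; case: ifPn => // iU.
  by rewrite (det_gram_csub_col0 (colnorm2_eq0 _) (setU11 i U)) ?mul0r ?scale0r // -rownorm2E.
rewrite rownorm2E in Ci_neq0.
have Pi : Pproj C [set i] = Qproj C^T [set i].
  by rewrite Pproj_Qproj // unitmxE det_gram_csub_set1 -unitmxE unit_gram_col.
have Pi_tr : (C *m Pproj C [set i])^T = Qproj C^T [set i] *m C^T.
  by rewrite Pi trmx_mul Qproj_set1 // tr_coproj.
rewrite Pi_tr scalerA mulrA rownorm2E colnorm2_det_gram_Qproj.
case: ifPn => iU; first by rewrite mul0r scale0r.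
have [->|D_neq0] := eqVneq (\det (gram (csub C^T (i |: U)))) 0.
  by rewrite mul0r !scale0r.
have [_ unit_gramL] := det_gram_csub_setU1_neq0 iU D_neq0.
rewrite /pTU (Pproj_Qproj (C := C *m _)); last first.
  by rewrite Pi_tr Qproj_set1 // csub_mulmx.
rewrite (Pproj_Qproj (U := i |: U)); last by rewrite unitmxE unitfE.
rewrite Pi_tr Pi -[_ *m (A *m _) *m _]mulmxA -[A *m _ *m _]mulmxA.
by rewrite -Qproj_setU1C // !mulmxA.
Qed.

Lemma rownorm2_scale_sum i U k :
  rownorm2 C i *: \sum_(T : {set 'I_dB} | #|T| == k)
     (\det (gram (csub (C *m Pproj C [set i])^T U)) * \det (gram (csub B T)))
       *: pTU (A *m Pproj C [set i]) B (C *m Pproj C [set i]) T U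
  = if i \in U then 0 else \sum_(T : {set 'I_dB} | #|T| == k)
     (\det (gram (csub C^T (i |: U))) * \det (gram (csub B T))) *: pTU A B C T (i |: U).
Proof.
rewrite scaler_sumr; under eq_bigr do rewrite rownorm2_scale_term.
by case: (i \in U); rewrite ?big1_eq.
Qed.

End Recursion.

Lemma Pkr_col_recursion (R : realFieldType) n d dB nC (A : 'M[R]_(n, d))
    (B : 'M[R]_(n, dB)) (C : 'M[R]_(nC, d)) k r : (0 < k)%N ->
  Pkr k r A B C =
    k%:R^-1 *: \sum_(i < dB) colnorm2 B i *:
       Pkr k.-1 r (Qproj B [set i] *m A) (Qproj B [set i] *m B) C.
Proof.
move=> k_gt0; apply/esym; under eq_bigr do rewrite PkrE scaler_sumr.
under eq_bigr do under eq_bigr do rewrite scaler_sumr.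
under eq_bigr do under eq_bigr do under eq_bigr do rewrite colnorm2_scale_term.
rewrite exchange_big /=.
under eq_bigr => U _ do rewrite (sum_setU1_card
  (fun T => (\det (gram (csub C^T U)) * \det (gram (csub B T))) *: pTU A B C T U) k_gt0).
by rewrite sumrMnl -scaler_nat scalerA mulVf ?pnatr_eq0 -?lt0n // scale1r PkrE.
Qed.

Lemma Pkr_row_recursion (R : realFieldType) n d dB nC (A : 'M[R]_(n, d))
    (B : 'M[R]_(n, dB)) (C : 'M[R]_(nC, d)) k r : (0 < r)%N ->
  Pkr k r A B C =
    r%:R^-1 *: \sum_(i < nC) rownorm2 C i *:
       Pkr k r.-1 (A *m Pproj C [set i]) B (C *m Pproj C [set i]).
Proof.
move=> r_gt0; apply/esym; under eq_bigr do rewrite PkrE scaler_sumr.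
under eq_bigr do under eq_bigr do rewrite rownorm2_scale_sum.
rewrite (sum_setU1_card (fun U => \sum_(T : {set 'I_dB} | #|T| == k)
  (\det (gram (csub C^T U)) * \det (gram (csub B T))) *: pTU A B C T U) r_gt0).
by rewrite -scaler_nat scalerA mulVf ?pnatr_eq0 -?lt0n // scale1r PkrE.
Qed.

Theorem lemmaA4 (R : realFieldType) (n d dB nC : nat)
  (A : 'M[R]_(n, d)) (B : 'M[R]_(n, dB)) (C : 'M[R]_(nC, d)) (k r : nat) :
  (1 <= k <= \rank B)%N -> (1 <= r <= \rank C)%N ->
  Pkr k r A B C =
    k%:R^-1 *: \sum_(i < dB) colnorm2 B i *:
       Pkr k.-1 r (Qproj B [set i] *m A) (Qproj B [set i] *m B) C
  /\
  Pkr k r A B C =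
    r%:R^-1 *: \sum_(i < nC) rownorm2 C i *:
       Pkr k r.-1 (A *m Pproj C [set i]) B (C *m Pproj C [set i]).
Proof.
move=> /andP[k_gt0 _] /andP[r_gt0 _].
by split; [exact: Pkr_col_recursion | exact: Pkr_row_recursion].
Qed.
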